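(* Let $(G,\cdot)$ be a loop with identity $e$ and $(H,\cdot)$ a non-trivial subloop such that $(xs\cdot z)s=x(sz\cdot s)$ for all $x,z\in G$, $s\in H$. Then the following are equivalent: (a) $J_\rho$ is a second Smarandache semi-automorphism of $G_H$, i.e. $eJ_\rho=e$ and $(sy\cdot s)^\rho=(s^\rho\cdot y^\rho)s^\rho$ for all $y\in G$, $s\in H$; (b) $sy\cdot y^\rho=s$ for all $y\in G$ and $s\in H$.
   Context: Juxtaposition binds more tightly than $\cdot$. $x^\rho$ is the right inverse of $x$ ($xx^\rho=e$), and $J_\rho:G\to G$ is the map $x\mapsto x^\rho$. A second Smarandache semi-automorphism of $G_H$ is a bijection $T$ of $G$ with $HT=H$, $eT=e$ and $(sy\cdot s)T=(sT\cdot yT)sT$ for all $y\in G$, $s\in H$. *)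

Definition is_loop {G : Type} (mul : G -> G -> G) (e : G) : Prop :=
  (forall x, mul e x = x /\ mul x e = x) /\
  (forall a b, exists! x, mul a x = b) /\
  (forall a b, exists! y, mul y a = b).

Definition is_subloop {G : Type} (mul : G -> G -> G) (e : G) (H : G -> Prop) : Prop :=
  H e /\
  (forall a b, H a -> H b -> H (mul a b)) /\
  (forall a b x, H a -> H b -> mul a x = b -> H x) /\
  (forall a b y, H a -> H b -> mul y a = b -> H y).

Definition nontrivial {G : Type} (e : G) (H : G -> Prop) : Prop :=
  exists s, H s /\ s <> e.

Definition bijective_map {G : Type} (T : G -> G) : Prop :=
  (forall x y, T x = T y -> x = y) /\ (forall y, exists x, T x = y).

Definition second_S_semi_automorphism {G : Type} (mul : G -> G -> G) (e : G)
    (H : G -> Prop) (T : G -> G) : Prop :=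
  bijective_map T /\
  (forall y, H y <-> exists x, H x /\ T x = y) /\
  T e = e /\
  (forall y s, H s ->
     T (mul (mul s y) s) = mul (mul (T s) (T y)) (T s)).


(* Taking z = s^rho in (xs.z)s = x(sz.s) and cancelling s gives the right inverse
   property (xs)s^rho = x for s in H.  Taking instead s^rho for s, (sy.s) for x
   and y^rho for z, and simplifying with that property, yields
   ((sy)y^rho)s^rho = (sy.s)((s^rho y^rho)s^rho).  As the left-hand side is
   s s^rho = e exactly when (sy)y^rho = s, and (sy.s)(sy.s)^rho = e, cancellation
   shows that (sy.s)^rho = (s^rho y^rho)s^rho holds iff (sy)y^rho = s, separately
   for each y and s.  The remaining conditions of (a) hold for the right
   inverse map of any loop. *)

Section RightInverse.

Variables (G : Type) (mul : G -> G -> G) (e : G) (rho : G -> G).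
Hypothesis loop : is_loop mul e.
Hypothesis mul_rho : forall x, mul x (rho x) = e.

Lemma mul_cancel_r a b c : mul a c = mul b c -> a = b.
Proof.
  intros E. destruct loop as [_ [_ Hrd]].
  destruct (Hrd c (mul b c)) as [y [_ U]].
  rewrite <- (U a E). apply U. reflexivity.
Qed.

Lemma mul_cancel_l a b c : mul c a = mul c b -> a = b.
Proof.
  intros E. destruct loop as [_ [Hld _]].
  destruct (Hld c (mul c b)) as [y [_ U]].
  rewrite <- (U a E). apply U. reflexivity.
Qed.

Lemma rho_unique x y : mul x y = e -> rho x = y.
Proof. intros E. apply (mul_cancel_l _ _ x). now rewrite mul_rho. Qed.

Lemma rho_e : rho e = e.
Proof. apply rho_unique. destruct loop as [Hun _]. apply Hun. Qed.

Lemma rho_left_inverse y : exists x, mul x y = e /\ rho x = y.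
Proof.
  destruct loop as [_ [_ Hrd]]. destruct (Hrd y e) as [x [Ex _]].
  exists x. split; [exact Ex | now apply rho_unique].
Qed.

Lemma rho_bijective : bijective_map rho.
Proof.
  split.
  - intros x y E. apply (mul_cancel_r _ _ (rho x)).
    now rewrite mul_rho, E, mul_rho.
  - intros y. destruct (rho_left_inverse y) as [x [_ Ex]]. now exists x.
Qed.

Variable H : G -> Prop.
Hypothesis subloop : is_subloop mul e H.

Lemma subloop_rho s : H s -> H (rho s).
Proof.
  intros Hs. destruct subloop as [He [_ [Hl _]]].
  exact (Hl s e (rho s) Hs He (mul_rho s)).
Qed.

Lemma subloop_image_rho y : H y <-> exists x, H x /\ rho x = y.
Proof.
  split.
  - intros Hy. destruct (rho_left_inverse y) as [x [Ex Rx]].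
    exists x. split; [|exact Rx].
    destruct subloop as [He [_ [_ Hr]]]. exact (Hr y e x Hy He Ex).
  - intros [x [Hx <-]]. now apply subloop_rho.
Qed.

Hypothesis right_bol : forall x z s, H s ->
  mul (mul (mul x s) z) s = mul x (mul (mul s z) s).

Lemma mul_rho_cancel x s : H s -> mul (mul x s) (rho s) = x.
Proof.
  intros Hs. apply (mul_cancel_r _ _ s).
  rewrite right_bol, mul_rho by exact Hs.
  destruct loop as [Hun _]. now rewrite (proj1 (Hun s)).
Qed.

Lemma mul_rho_rho_expand y s : H s ->
  mul (mul (mul s y) (rho y)) (rho s) =
  mul (mul (mul s y) s) (mul (mul (rho s) (rho y)) (rho s)).
Proof.
  intros Hs. rewrite <- right_bol by now apply subloop_rho.
  now rewrite (mul_rho_cancel (mul s y) s Hs).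
Qed.

Lemma rho_semi_morph_iff y s : H s ->
  rho (mul (mul s y) s) = mul (mul (rho s) (rho y)) (rho s) <->
  mul (mul s y) (rho y) = s.
Proof.
  intros Hs. split.
  - intros A. apply (mul_cancel_r _ _ (rho s)).
    now rewrite mul_rho_rho_expand, <- A, !mul_rho.
  - intros B. apply rho_unique.
    now rewrite <- mul_rho_rho_expand, B, mul_rho.
Qed.

End RightInverse.

Theorem theorem3p5 (G : Type) (mul : G -> G -> G) (e : G) (H : G -> Prop)
  (rho : G -> G)
  (HG : is_loop mul e)
  (HH : is_subloop mul e H)
  (Hnt : nontrivial e H)
  (Hrho : forall x, mul x (rho x) = e)
  (Hid : forall x z s, H s ->
     mul (mul (mul x s) z) s = mul x (mul (mul s z) s)) :
  second_S_semi_automorphism mul e H rho <->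
  (forall y s, H s -> mul (mul s y) (rho y) = s).
Proof.
  split.
  - intros [_ [_ [_ A]]] y s Hs.
    exact (proj1 (rho_semi_morph_iff G mul e rho HG Hrho H HH Hid y s Hs)
                 (A y s Hs)).
  - intros B. split; [|split; [|split]].
    + exact (rho_bijective G mul e rho HG Hrho).
    + exact (subloop_image_rho G mul e rho HG Hrho H HH).
    + exact (rho_e G mul e rho HG Hrho).
    + intros y s Hs.
      exact (proj2 (rho_semi_morph_iff G mul e rho HG Hrho H HH Hid y s Hs)
                 (B y s Hs)).
Qed.
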